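(* Let $R$ be a commutative ring, $A$ a commutative $R$-algebra and $M$ an $A$-module. The differential bundle $\mathsf q_M:M[\varepsilon]\to A$ admits a vertical connection (in the dual-numbers tangent category of commutative $R$-algebras) if and only if $M=\{0\}$.
   Context: Work in the category of commutative $R$-algebras with $R$-algebra homomorphisms. For an algebra $B$, $B[\varepsilon]=\{x+y\varepsilon: x,y\in B,\ \varepsilon^2=0\}$ (dual numbers); for an algebra map $f$, $\mathsf T(f)(x+y\varepsilon)=f(x)+f(y)\varepsilon$. For an $A$-module $M$, $M[\varepsilon]=\{a+m\varepsilon: a\in A, m\in M\}$ is the square-zero extension algebra ($\varepsilon^2=0$, so $(m\varepsilon)(n\varepsilon)=0$), with projection $\mathsf q_M:M[\varepsilon]\to A$, $a+m\varepsilon\mapsto a$. Write $M[\varepsilon][\varepsilon']=\{a+m\varepsilon+b\varepsilon'+n\varepsilon\varepsilon'\}$ ($a,b\in A$, $m,n\in M$, $\varepsilon'^2=0$) for the dual numbers over $M[\varepsilon]$, and $M[\varepsilon][\varepsilon'][\varepsilon'']$ for the dual numbers over that. Maps: the lift $\lambda_M:M[\varepsilon]\to M[\varepsilon][\varepsilon']$, $a+m\varepsilon\mapsto a+m\varepsilon\varepsilon'$; the projection $\mathsf p_{M[\varepsilon]}:M[\varepsilon][\varepsilon']\to M[\varepsilon]$, $x+y\varepsilon'\mapsto x$; the vertical lift $\ell_{M[\varepsilon]}:M[\varepsilon][\varepsilon']\to M[\varepsilon][\varepsilon'][\varepsilon'']$, $x+y\varepsilon'\mapsto x+y\varepsilon'\varepsilon''$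 ($x,y\in M[\varepsilon]$); the canonical flip $\mathsf c_{M[\varepsilon]}$ on $M[\varepsilon][\varepsilon'][\varepsilon'']$, $x+y\varepsilon'+z\varepsilon''+w\varepsilon'\varepsilon''\mapsto x+z\varepsilon'+y\varepsilon''+w\varepsilon'\varepsilon''$; and $\mathsf T(\lambda_M):M[\varepsilon][\varepsilon'']\to M[\varepsilon][\varepsilon'][\varepsilon'']$, $x+y\varepsilon''\mapsto\lambda_M(x)+\lambda_M(y)\varepsilon''$, and similarly $\mathsf T(\mathsf K)(x+y\varepsilon'+z\varepsilon''+w\varepsilon'\varepsilon'')=\mathsf K(x+y\varepsilon')+\mathsf K(z+w\varepsilon')\varepsilon'$ identifying the outer variable. A vertical connection on $\mathsf q_M$ is an $R$-algebra map $\mathsf K:M[\varepsilon][\varepsilon']\to M[\varepsilon]$ such that (K1) $\mathsf K\circ\lambda_M=\mathrm{id}$; (K2) $\mathsf q_M\circ\mathsf K=\mathsf q_M\circ\mathsf p_{M[\varepsilon]}$; (K3) $\lambda_M\circ\mathsf K=\mathsf T(\mathsf K)\circ\ell_{M[\varepsilon]}$; (K4) $\lambda_M\circ\mathsf K=\mathsf T(\mathsf K)\circ\mathsf c_{M[\varepsilon]}\circ\mathsf T(\lambda_M)$. *)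

From HB Require Import structures.
From mathcomp Require Import all_boot all_order all_algebra.
Set Implicit Arguments. Unset Strict Implicit. Unset Printing Implicit Defensive.
Import GRing.Theory.
Local Open Scope ring_scope.

(* A commutative R-algebra is a commutative ring A with a ring morphism
   f : R -> A (no nontriviality assumed on R or A).
   Elements are represented concretely:
     M[e]            = A * M              (a + m e)
     M[e][e']        = M[e] * M[e]        (x + y e')
     M[e][e'][e'']   = M[e][e'] * M[e][e'] (X + Y e'') *)
Section SquareZero.
Variables (R A : comPzRingType) (f : {rmorphism R -> A}) (M : lmodType A).

Definition ME := (A * M)%type.
Definition ME2 := (ME * ME)%type.
Definition ME3 := (ME2 * ME2)%type.

Definition me_add (x y : ME) : ME := (x.1 + y.1, x.2 + y.2).
Definition me_mul (x y : ME) : ME := (x.1 * y.1, x.1 *: y.2 + y.1 *: x.2).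
Definition me_one : ME := (1, 0).
Definition me_scale (r : R) (x : ME) : ME := (f r * x.1, f r *: x.2).

Definition me2_add (x y : ME2) : ME2 := (me_add x.1 y.1, me_add x.2 y.2).
Definition me2_mul (x y : ME2) : ME2 :=
  (me_mul x.1 y.1, me_add (me_mul x.1 y.2) (me_mul y.1 x.2)).
Definition me2_one : ME2 := (me_one, (0, 0)).
Definition me2_scale (r : R) (x : ME2) : ME2 := (me_scale r x.1, me_scale r x.2).

Definition is_R_alg_hom (K : ME2 -> ME) : Prop :=
  [/\ forall x y, K (me2_add x y) = me_add (K x) (K y),
      forall x y, K (me2_mul x y) = me_mul (K x) (K y),
      K me2_one = me_one &
      forall r x, K (me2_scale r x) = me_scale r (K x)].

Definition qM (x : ME) : A := x.1.
Definition lambdaM (x : ME) : ME2 := ((x.1, 0), (0, x.2)).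
Definition pME (x : ME2) : ME := x.1.
Definition ellME (x : ME2) : ME3 := ((x.1, (0, 0)), ((0, 0), x.2)).
Definition cME (X : ME3) : ME3 := ((X.1.1, X.2.1), (X.1.2, X.2.2)).
       (* x + y e' + z e'' + w e'e'' |-> x + z e' + y e'' + w e'e'' *)
Definition T_lambdaM (x : ME2) : ME3 := (lambdaM x.1, lambdaM x.2).
Definition T_K (K : ME2 -> ME) (X : ME3) : ME2 := (K X.1, K X.2).

Definition vertical_connection (K : ME2 -> ME) : Prop :=
  [/\ is_R_alg_hom K,
      (* K1 *) forall x, K (lambdaM x) = x,
      (* K2 *) forall x, qM (K x) = qM (pME x),
      (* K3 *) forall x, lambdaM (K x) = T_K K (ellME x) &
      (* K4 *) forall x, lambdaM (K x) = T_K K (cME (T_lambdaM x))].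

End SquareZero.

From HB Require Import structures.
From mathcomp Require Import all_boot all_order all_algebra.
Local Open Scope ring_scope.
Import GRing.Theory.

(** If [K] is a vertical connection, (K3) and (K2) force [K] to send
    [x + 0 e'] to [q_M x + 0 e]; in particular [K (m e) = 0].  Since
    [m e e' = (m e) * e'] and [K] is multiplicative, (K1) then gives
    [m e = K (m e e') = K (m e) * K e' = 0], so [M = 0].  Conversely, when
    [M = 0] every element of [M[e]] is determined by its [A]-component and
    [x + y e' |-> q_M x] satisfies all the axioms. *)

Section VerticalConnection.
Variables (R A : comPzRingType) (f : {rmorphism R -> A}) (M : lmodType A).

Lemma lambdaM_mul_eps (m : M) :
  lambdaM (0, m) = me2_mul ((0, m), (0, 0)) ((0, 0), (1, 0)).
Proof.
rewrite /me2_mul /me_mul /me_add /lambdaM /=.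
by rewrite !mul0r !scaler0 !scale0r !addr0 scale1r add0r.
Qed.

Section Necessity.
Variable K : ME2 M -> ME M.
Hypothesis K_conn : vertical_connection f K.

Lemma vertical_connection_base (x : ME M) : K (x, (0, 0)) = (x.1, 0).
Proof.
case: K_conn => _ _ K2 K3 _.
have [<- _] := K3 (x, (0, 0)).
have := K2 (x, (0, 0)); rewrite /qM /pME /= => ->.
by case: x.
Qed.

Lemma vertical_connection_module_trivial (m : M) : m = 0.
Proof.
case: K_conn => [[_ Kmul _ _] K1 _ _ _].
have := K1 (0, m).
rewrite lambdaM_mul_eps Kmul vertical_connection_base /me_mul /=.
by rewrite mul0r scaler0 scale0r addr0 => -[].
Qed.

End Necessity.

Definition base_connection (x : ME2 M) : ME M := (x.1.1, 0).

Lemma base_connection_vertical :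
  (forall m : M, m = 0) -> vertical_connection f base_connection.
Proof.
move=> M0.
have eq_ME (u v : ME M) : u.1 = v.1 -> u = v.
  by case: u v => [a x] [b y] /= ->; rewrite (M0 x) (M0 y).
split; first split.
- by move=> x y; apply: eq_ME.
- by move=> x y; apply: eq_ME.
- exact: eq_ME.
- by move=> r x; apply: eq_ME.
- by move=> x; apply: eq_ME.
- by [].
- by move=> x; congr (_, _); apply: eq_ME.
- by move=> x; congr (_, _); apply: eq_ME.
Qed.

End VerticalConnection.

Theorem proposition3p1 (R A : comPzRingType) (f : {rmorphism R -> A})
    (M : lmodType A) :
  (exists K : ME2 M -> ME M, vertical_connection f K) <-> (forall m : M, m = 0).
Proof.
split.
- by move=> [K K_conn]; exact: vertical_connection_module_trivial K_conn.
- by move=> M0; exists (@base_connection _ M); exact: base_connection_vertical.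
Qed.
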